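(* Let $k\geq 2$ be an integer and let $C_k(n)$ denote the number of closed words of length $n$ over the alphabet $\Sigma_k=\{0,1,\ldots,k-1\}$. (a) There exist constants $N>0$ and $c>0$ (depending on $k$) such that $C_k(n)\geq c\,\frac{k^n}{n}$ for all $n>N$. (b) There exist constants $N'>0$ and $c'>0$ (depending on $k$) such that $C_k(n)\leq c'\,\frac{k^n}{n}$ for all $n>N'$.
   Context: A word $u$ is a factor of a word $w$ if $w=xuy$ for some words $x,y$; occurrences of $u$ in $w$ are counted as factor positions (overlaps allowed). A border of a word $w$ is a non-empty word $u$ that is both a proper prefix and a proper suffix of $w$. A word $w$ is closed if $|w|\leq 1$ or if $w$ has a border that occurs exactly twice in $w$ (as a factor). *)

From mathcomp Require Import all_boot all_order all_algebra.
Set Implicit Arguments. Unset Strict Implicit. Unset Printing Implicit Defensive.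

Definition occ (T : eqType) (u w : seq T) : nat :=
  if size u <= size w then
    count (fun i => take (size u) (drop i w) == u) (iota 0 (size w - size u).+1)
  else 0.

Definition border (T : eqType) (u w : seq T) : bool :=
  [&& 0 < size u, size u < size w, prefix u w & suffix u w].

(* w is closed: |w| <= 1, or w has a border occurring exactly twice in w.
   Borders of w are exactly the prefixes take i w for 0 < i < |w|. *)
Definition closed_word (T : eqType) (w : seq T) : bool :=
  (size w <= 1) ||
  has (fun i => border (take i w) w && (occ (take i w) w == 2)) (iota 0 (size w)).

Definition C (k n : nat) : nat :=
  #|[set w : n.-tuple 'I_k | closed_word (tval w)]|.

From mathcomp Require Import all_boot all_order all_algebra.
From mathcomp Require Import zify ring lra.
Import Order.TTheory GRing.Theory Num.Theory.

Set Implicit Arguments.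
Unset Strict Implicit.
Unset Printing Implicit Defensive.

(* For 2m <= n, a word closed through a border u of length m reads
   u v u with u not occurring in v.

   Lower bound: take the least m with 2n < k^m.  Of the k^(n-m) words whose prefix
   and suffix of length m coincide, at most n k^(n-2m) < k^(n-m)/2 contain a third
   occurrence of the prefix; all others are closed, and k^(n-m) >= k^n / (2kn).

   Upper bound: cut v into q blocks of length 2k^m.  In a random block of that length,
   the number Z of occurrences of u starting in its first k^m positions has E Z = 1
   and E Z^2 <= 5, so by Cauchy-Schwarz the block avoids u with probability at most
   4/5.  Hence n times the number of closed words with border length m is
   O((q + 2) (4/5)^q k^n); as q strictly decreases with m these terms sum to O(k^n),
   while the m with q = 0 have k^m of order at least n and contribute O(k^n) through
   the trivial bound n k^(n-m). *)

(** * Counting tuples *)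

(* Junk value: the constant tuple when [size s != n]. *)
Definition tuple_of_seq (A : Type) (a0 : A) n (s : seq A) : n.-tuple A :=
  insubd (nseq_tuple n a0) s.

Lemma val_tuple_of_seq (A : Type) (a0 : A) n s :
  size s = n -> val (tuple_of_seq a0 n s) = s.
Proof. by move=> hs; rewrite /tuple_of_seq val_insubd hs eqxx. Qed.

Section Counting.

Variables (A : finType) (a0 : A).

Lemma card_le_determined n (S : {set n.-tuple A}) (F : seq nat) :
  {in S &, forall x y : n.-tuple A,
     {in F, forall j, nth a0 x j = nth a0 y j} -> x = y} ->
  #|S| <= #|A| ^ size F.
Proof.
move=> detF.
pose restr (x : n.-tuple A) : (size F).-tuple A := map_tuple (nth a0 x) (in_tuple F).
rewrite -card_tuple -(@card_in_imset _ _ restr S); last first.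
  move=> x y xS yS /(congr1 val) /= e; apply: detF => // j jF.
  have := congr1 (fun s => nth a0 s (index j F)) e.
  by rewrite /= !(nth_map 0) ?index_mem // nth_index.
by rewrite -cardsT subset_leq_card // subsetT.
Qed.

Lemma card_le_free_positions n (S : {set n.-tuple A}) (F : seq nat) :
  (forall x y, x \in S -> y \in S -> forall j, j < n -> j \notin F ->
     (forall i, i < j -> nth a0 x i = nth a0 y i) -> nth a0 x j = nth a0 y j) ->
  #|S| <= #|A| ^ size F.
Proof.
move=> detj; apply: card_le_determined => x y xS yS eqF.
apply: val_inj; apply: (@eq_from_nth _ a0); first by rewrite !size_tuple.
move=> j; rewrite size_tuple; elim/ltn_ind: j => j IH jn.
have [jF|jF] := boolP (j \in F); first exact: eqF.
by apply: detj => // i ij; apply: IH => //; apply: ltn_trans jn.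
Qed.

Lemma card_le_back_references n (S : {set n.-tuple A}) (F : seq nat) (g : nat -> nat) :
  (forall j, j < n -> j \notin F -> g j < j) ->
  (forall x j, x \in S -> j < n -> j \notin F -> nth a0 x j = nth a0 x (g j)) ->
  #|S| <= #|A| ^ size F.
Proof.
move=> g_lt back; apply: card_le_free_positions => x y xS yS j jn jF earlier.
by rewrite (back x) // (back y) // earlier // g_lt.
Qed.

End Counting.

Lemma card_le_sum_cover (T : finType) (S : {set T}) N (P : nat -> {set T}) :
  (forall x, x \in S -> exists2 i, i < N & x \in P i) ->
  #|S| <= \sum_(i < N) #|P i|.
Proof.
move=> coverS.
have -> : \sum_(i < N) #|P i| = \sum_x \sum_(i < N) (x \in P i : nat).
  rewrite exchange_big /=; apply: eq_bigr => i _.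
  by rewrite -sum1_card big_mkcond /=; apply: eq_bigr => x _; case: (x \in P i).
rewrite -sum1_card [X in _ <= X](bigID (mem S)) /= (leq_trans _ (leq_addr _ _)) //.
apply: leq_sum => x xS; have [i iN xP] := coverS x xS.
by rewrite (bigD1 (Ordinal iN)) //= xP.
Qed.

Lemma sum_nat_card (T : finType) (P : pred T) : \sum_x (P x : nat) = #|[set x | P x]|.
Proof. by rewrite -sum1dep_card [RHS]big_mkcond; apply: eq_bigr => x _; case: (P x). Qed.

Lemma ler_sum_reindex (R : numDomainType) N M (P : pred nat) (h : nat -> nat)
    (f : nat -> R) :
  (forall d, 0 <= f d)%R ->
  (forall i, i < N -> P i -> h i <= M) ->
  (forall i j, i < N -> j < N -> P i -> P j -> h i = h j -> i = j) ->
  (\sum_(i < N | P i) f (h i) <= \sum_(d < M.+1) f d)%R.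
Proof.
move=> f_ge0 hM h_inj.
pose g (i : 'I_N) : 'I_M.+1 := inord (h i).
have -> : (\sum_(i < N | P i) f (h i) = \sum_(i in [pred i : 'I_N | P i]) f (g i))%R.
  by apply: eq_bigr => i Pi; rewrite /g inordK // ltnS hM.
rewrite -(big_imset (fun d : 'I_M.+1 => f d)) /=; last first.
  move=> i j; rewrite !inE => Pi Pj /(congr1 val) /=.
  rewrite /g !inordK ?ltnS ?hM // => e.
  by apply: val_inj; apply: (h_inj _ _ (ltn_ord i) (ltn_ord j)).
rewrite [X in (_ <= X)%R](bigID (mem (g @: [pred i : 'I_N | P i]))) /= lerDl.
by apply: sumr_ge0.
Qed.

Lemma leq_sum_reindex N M (P : pred nat) (h : nat -> nat) (f : nat -> nat) :
  (forall i, i < N -> P i -> h i <= M) ->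
  (forall i j, i < N -> j < N -> P i -> P j -> h i = h j -> i = j) ->
  \sum_(i < N | P i) f (h i) <= \sum_(d < M.+1) f d.
Proof.
move=> hM h_inj; rewrite -(ler_nat int) !natr_sum.
exact: (@ler_sum_reindex int N M P h (fun d => (f d)%:R%R)).
Qed.

Lemma geometric_sum_lt K N : 1 < K -> \sum_(e < N) K ^ e < K ^ N.
Proof.
move=> K1; elim: N => [|N IH]; first by rewrite big_ord0 expn0.
rewrite big_ord_recr /= expnS.
have : K ^ N + K ^ N <= K * K ^ N by rewrite addnn -mul2n leq_mul2r K1 orbT.
by move: IH; set S := \sum_(_ < _) _; lia.
Qed.

Lemma geometric_sum_lt_double K E : 1 < K -> \sum_(d < E.+1) K ^ d < 2 * K ^ E.
Proof.
move=> K1; rewrite big_ord_recr /=; have := geometric_sum_lt E K1.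
by set S := \sum_(_ < _) _; lia.
Qed.

Lemma sqr_sum_le_card_support (T : finType) (Z : T -> nat) :
  (\sum_x Z x) ^ 2 <= #|[set x | 0 < Z x]| * \sum_x Z x ^ 2.
Proof.
set NZ := [set x | 0 < Z x].
have -> : \sum_x Z x = \sum_(x in NZ) Z x.
  rewrite [LHS](bigID (mem NZ)) /= [X in _ + X]big1 ?addn0 // => x.
  by rewrite inE -eqn0Ngt => /eqP.
have sub_sqr : \sum_(x in NZ) Z x ^ 2 <= \sum_x Z x ^ 2.
  by rewrite [X in _ <= X](bigID (mem NZ)) leq_addr.
apply: leq_trans (leq_mul (leqnn _) sub_sqr).
rewrite -(leq_pmul2l (isT : 0 < 2)) -mulnn big_distrlr big_distrr /=.
apply: (@leq_trans (\sum_(x in NZ) \sum_(y in NZ) (Z x ^ 2 + Z y ^ 2))).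
  apply: leq_sum => x _; rewrite big_distrr; apply: leq_sum => y _.
  exact: (nat_Cauchy _ _).1.
under eq_bigr do rewrite big_split /= sum_nat_const.
by rewrite big_split /= sum_nat_const -big_distrr /=; lia.
Qed.

(** * Occurrences and avoidance *)

Definition occurs_at (T : eqType) (u w : seq T) i := take (size u) (drop i w) == u.

Lemma occurs_atP (T : eqType) (a0 : T) (u w : seq T) i : i + size u <= size w ->
  reflect (forall t, t < size u -> nth a0 w (i + t) = nth a0 u t) (occurs_at u w i).
Proof.
move=> h; apply: (iffP eqP) => [e t ht|H].
  by rewrite -[in RHS]e nth_take // nth_drop.
apply: (@eq_from_nth _ a0); first by rewrite size_take_min size_drop; lia.
move=> t; rewrite size_take_min size_drop => ht.
by rewrite nth_take ?nth_drop ?H //; lia.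
Qed.

Lemma occurs_at_infix (T : eqType) (u w : seq T) i : occurs_at u w i -> infix u w.
Proof.
move/eqP=> e; apply: (@infix_trans _ (drop i w)); last exact: infix_drop.
by rewrite -e infix_take.
Qed.

Lemma occurs_at_cat (T : eqType) (u x y : seq T) : occurs_at u (x ++ u ++ y) (size x).
Proof. by rewrite /occurs_at drop_size_cat // take_size_cat. Qed.

Section Avoiding.

Variables (A : finType) (a0 : A) (u : seq A).
Local Notation K := #|A|.
Local Notation m := (size u).

Definition avoiding n := [set v : n.-tuple A | ~~ infix u v].

Lemma card_occurs_at B i : i + m <= B ->
  K ^ (B - m) <= #|[set x : B.-tuple A | occurs_at u x i]|.
Proof.
move=> iB; pose ins (y : seq A) := take i y ++ u ++ drop i y.
pose f (y : (B - m).-tuple A) : B.-tuple A := tuple_of_seq a0 B (ins y).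
have size_ins (y : (B - m).-tuple A) : size (ins y) = B.
  by rewrite /ins !size_cat size_take_min size_drop size_tuple; lia.
have size_take_i (y : (B - m).-tuple A) : size (take i y) = i.
  by rewrite size_take_min size_tuple; lia.
rewrite -card_tuple -cardsT -(@card_in_imset _ _ f); last first.
  move=> y z _ _ /(congr1 val); rewrite /f !val_tuple_of_seq // /ins => e.
  apply: val_inj; rewrite /= -(cat_take_drop i y) -(cat_take_drop i z).
  have := congr1 (take i) e; rewrite !take_size_cat ?size_take_i // => ->.
  have := congr1 (drop (i + m)) e.
  by rewrite !catA !drop_size_cat ?size_cat ?size_take_i // => ->.
apply: subset_leq_card; apply/subsetP => x /imsetP [y _ ->].
by rewrite inE /occurs_at /f val_tuple_of_seq // /ins drop_size_cat ?take_size_cat.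
Qed.

Lemma card_occurs_at2 B i j : i + m <= B -> j + m <= B ->
  #|[set x : B.-tuple A | occurs_at u x i && occurs_at u x j]|
  <= K ^ (B - 2 * m) + K ^ (B - m - (i - j + (j - i))).
Proof.
wlog ij : i j / i <= j => [wlog_ij iB jB|iB jB].
  have [ij|/ltnW ji] := leqP i j; first exact: wlog_ij.
  rewrite [i - j + _]addnC.
  rewrite (eq_card (B := [set x : B.-tuple A | occurs_at u x j && occurs_at u x i])).
    exact: wlog_ij.
  by move=> x; rewrite !inE andbC.
set S := [set x | _].
have agree x y : x \in S -> y \in S -> forall p, p < B ->
    (i <= p < i + m) || (j <= p < j + m) -> nth a0 x p = nth a0 y p.
  have occ k (z : B.-tuple A) : k + m <= B ->
      occurs_at u z k -> forall p, k <= p < k + m -> nth a0 z p = nth a0 u (p - k).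
    move=> kB; rewrite -(size_tuple z) in kB.
    move=> /(occurs_atP a0 kB) occ_z p /andP[kp pk].
    by rewrite -occ_z ?subnKC // ltn_subLR.
  rewrite !inE => /andP[xi xj] /andP[yi yj] p _ /orP[] hp.
    by rewrite (occ i x) ?(occ i y).
  by rewrite (occ j x) ?(occ j y).
have free F : (forall p, p < B -> p \notin F -> (i <= p < i + m) || (j <= p < j + m)) ->
    #|S| <= K ^ size F.
  move=> outside_F; apply: (card_le_free_positions (a0 := a0)) => x y xS yS p pB pF _.
  exact: agree (outside_F p pB pF).
have [far|near] := leqP m (j - i).
  set F := iota 0 i ++ iota (i + m) (j - i - m) ++ iota (j + m) (B - j - m).
  apply: leq_trans (free F _) _.
    by move=> p pB; rewrite !mem_cat !mem_iota; apply: contraR; lia.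
  by rewrite !size_cat !size_iota (_ : _ + _ = B - 2 * m) ?leq_addr //; lia.
apply: leq_trans (free (iota 0 i ++ iota (j + m) (B - j - m)) _) _.
  by move=> p pB; rewrite !mem_cat !mem_iota; apply: contraR; lia.
by rewrite !size_cat !size_iota (_ : _ + _ = B - m - (i - j + (j - i))) ?leq_addl //; lia.
Qed.

Lemma sum_card_occurs_at2 M B i : 1 < K -> M + m <= B -> i < M ->
  \sum_(j < M) #|[set x : B.-tuple A | occurs_at u x i && occurs_at u x j]|
  <= M * K ^ (B - 2 * m) + 4 * K ^ (B - m).
Proof.
move=> K1 MB iM; set E := B - m.
pose dist j := i - j + (j - i).
apply: (@leq_trans (\sum_(j < M) (K ^ (B - 2 * m) + K ^ (E - dist j)))).
  by apply: leq_sum => j _; apply: card_occurs_at2; have := ltn_ord j; lia.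
rewrite big_split /= sum_nat_const card_ord leq_add2l.
have half (P : pred nat) : {in P &, injective dist} ->
    \sum_(j < M | P j) K ^ (E - dist j) < 2 * K ^ E.
  move=> dist_inj; apply: leq_ltn_trans (geometric_sum_lt_double E K1).
  apply: (leq_sum_reindex (P := P) (h := fun j => E - dist j)).
    by move=> *; apply: leq_subr.
  by move=> a b aM bM Pa Pb e; apply: dist_inj => //; rewrite /dist in e *; lia.
have below : \sum_(j < M | j <= i) K ^ (E - dist j) < 2 * K ^ E.
  by apply: (half (fun j => j <= i)) => a b; rewrite /dist /=; lia.
have above : \sum_(j < M | ~~ (j <= i)) K ^ (E - dist j) < 2 * K ^ E.
  by apply: (half (fun j => ~~ (j <= i))) => a b; rewrite /dist /=; lia.
rewrite (bigID (fun j : 'I_M => j <= i)) /=.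
by apply: leq_trans (leq_add (ltnW below) (ltnW above)) _; rewrite -mulnDl.
Qed.

Lemma sum_occurrences M B : M + m <= B ->
  M * K ^ (B - m) <= \sum_(x : B.-tuple A) \sum_(i < M) occurs_at u x i.
Proof.
move=> MB; rewrite exchange_big /= -[M in M * _]card_ord -sum_nat_const.
apply: leq_sum => i _; rewrite sum_nat_card.
by apply: card_occurs_at; have := ltn_ord i; lia.
Qed.

Lemma sum_sqr_occurrences M B : 1 < K -> M + m <= B ->
  \sum_(x : B.-tuple A) (\sum_(i < M) occurs_at u x i) ^ 2
  <= M * (M * K ^ (B - 2 * m) + 4 * K ^ (B - m)).
Proof.
move=> K1 MB.
have -> : \sum_(x : B.-tuple A) (\sum_(i < M) occurs_at u x i) ^ 2 =
    \sum_(i < M) \sum_(j < M)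
      #|[set x : B.-tuple A | occurs_at u x i && occurs_at u x j]|.
  under eq_bigr do rewrite -mulnn big_distrlr /=.
  rewrite exchange_big /=; apply: eq_bigr => i _.
  rewrite exchange_big /=; apply: eq_bigr => j _.
  by rewrite -sum_nat_card; apply: eq_bigr => x _; rewrite mulnb.
rewrite -[M in M * _]card_ord -sum_nat_const.
by apply: leq_sum => i _; apply: sum_card_occurs_at2.
Qed.

Lemma card_avoiding_block : 1 < K -> 0 < m ->
  5 * #|avoiding (2 * K ^ m)| <= 4 * K ^ (2 * K ^ m).
Proof.
move=> K1 m0; set M := K ^ m; set B := 2 * M.
have mM : m < M by apply: ltn_expl.
have MB : M + m <= B by rewrite /B; lia.
have eq1 : M * K ^ (B - m) = K ^ B by rewrite /M -expnD; congr (_ ^ _); lia.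
have eq2 : M * (M * K ^ (B - 2 * m)) = K ^ B.
  by rewrite /M -!expnD; congr (_ ^ _); lia.
pose Z (x : B.-tuple A) := \sum_(i < M) occurs_at u x i.
set KB := K ^ B in eq1 eq2 *; set supp := [set x | 0 < Z x].
have first_moment : KB <= \sum_x Z x by rewrite -eq1; apply: sum_occurrences.
have second_moment : \sum_x Z x ^ 2 <= 5 * KB.
  by apply: leq_trans (sum_sqr_occurrences K1 MB) _; rewrite mulnDr eq2 mulnCA eq1.
have supp_large : KB <= 5 * #|supp|.
  have KB0 : 0 < KB by rewrite expn_gt0; lia.
  rewrite -(leq_pmul2r KB0) mulnn (mulnC 5) -mulnA.
  apply: leq_trans (leq_mul (leqnn _) second_moment).
  by apply: leq_trans (sqr_sum_le_card_support Z); rewrite leq_sqr.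
have supp_infix : supp \subset ~: avoiding B.
  apply/subsetP => x; rewrite !inE negbK; apply: contraLR => avoid.
  rewrite -leqNgt leqn0; apply/eqP/big1 => i _.
  by case: (boolP (occurs_at u x i)) => // /occurs_at_infix; rewrite (negbTE avoid).
have := cardsC (avoiding B); rewrite card_tuple -/KB.
by have := subset_leq_card supp_infix; lia.
Qed.

Lemma card_avoiding_cat L1 L2 :
  #|avoiding (L1 + L2)| <= #|avoiding L1| * #|avoiding L2|.
Proof.
pose f (v : (L1 + L2).-tuple A) :=
  (tuple_of_seq a0 L1 (take L1 v), tuple_of_seq a0 L2 (drop L1 v)).
have size_l (v : (L1 + L2).-tuple A) : size (take L1 v) = L1.
  by rewrite size_take_min size_tuple; lia.
have size_r (v : (L1 + L2).-tuple A) : size (drop L1 v) = L2.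
  by rewrite size_drop size_tuple; lia.
rewrite -cardsX -(@card_in_imset _ _ f); last first.
  move=> v w _ _ [] /(congr1 val) el /(congr1 val) er; apply: val_inj.
  rewrite /= !val_tuple_of_seq // in el er.
  by rewrite /= -(cat_take_drop L1 v) -(cat_take_drop L1 w) el er.
apply: subset_leq_card; apply/subsetP => p /imsetP [v]; rewrite inE => avoid ->.
rewrite !inE /= !val_tuple_of_seq //; apply/andP; split; apply: contra avoid => h.
  by apply: infix_trans h (infix_take _ _).
by apply: infix_trans h (infix_drop _ _).
Qed.

Lemma card_avoiding_blocks q r : 1 < K -> 0 < m ->
  5 ^ q * #|avoiding (q * (2 * K ^ m) + r)| <= 4 ^ q * K ^ (q * (2 * K ^ m) + r).
Proof.
move=> K1 m0; set B := 2 * K ^ m.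
elim: q => [|q IH].
  by rewrite !mul1n -card_tuple; apply: subset_leq_card; apply/subsetP.
rewrite (_ : q.+1 * B + r = B + (q * B + r)); last by rewrite mulSn addnA.
apply: leq_trans (leq_mul (leqnn _) (card_avoiding_cat _ _)) _.
have regroup c x y : c ^ q.+1 * (x * y) = (c * x) * (c ^ q * y) by rewrite expnS; ring.
by rewrite expnD !regroup; apply: leq_mul IH; apply: card_avoiding_block.
Qed.

End Avoiding.

(** * Upper bound *)

Lemma count_iota_ge3 (p : pred nat) N a b c : a < b < c -> c <= N ->
  p a -> p b -> p c -> 3 <= count p (iota 0 N.+1).
Proof.
move=> /andP[ab bc] cN pa pb pc; rewrite -size_filter.
apply: (@uniq_leq_size _ [:: a; b; c]).
  by rewrite /= !inE; apply/and3P; split => //; apply/negP; lia.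
move=> z; rewrite !inE mem_filter mem_iota.
by move=> /or3P[] /eqP ->; apply/andP; split => //; lia.
Qed.

Lemma count_iota_ends (p : pred nat) N : 0 < N -> p 0 -> p N ->
  (forall i, 0 < i < N -> ~~ p i) -> count p (iota 0 N.+1) = 2.
Proof.
move=> N0 p0 pN inner.
have -> : iota 0 N.+1 = 0 :: iota 1 N.-1 ++ [:: N].
  by rewrite -[N.+1]addn1 iotaD add0n -{1}(prednK N0).
rewrite /= count_cat /= p0 pN (eq_in_count (a2 := pred0)) ?count_pred0 //.
by move=> i; rewrite mem_iota => hi; apply/negbTE/inner; lia.
Qed.

Lemma border_take (T : eqType) (w : seq T) m :
  border (take m w) w -> 0 < m < size w /\ drop (size w - m) w = take m w.
Proof.
rewrite /border suffixE !size_take_min => /and4P[m0 mw _ /eqP suff].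
have mmin : minn m (size w) = m by lia.
by rewrite mmin in m0 mw suff; split=> //; apply/andP.
Qed.

Lemma border_cat (T : eqType) (w : seq T) m : 2 * m <= size w ->
  border (take m w) w -> w = take m w ++ drop m (take (size w - m) w) ++ take m w.
Proof.
move=> mw /border_take [_ suff]; rewrite -{2}suff catA.
by rewrite -{1}(@take_takel _ m (size w - m)) ?cat_take_drop //; lia.
Qed.

Definition nblocks K n m := (n - 2 * m) %/ (2 * K ^ m).

Section UpperBound.

Variables (A : finType) (a0 : A).
Local Notation K := #|A|.

Definition closed_with_border n m :=
  [set w : n.-tuple A | border (take m w) w && (occ (take m w) w == 2)].

Lemma card_closed_le_sum n : 1 < n ->
  #|[set w : n.-tuple A | closed_word w]| <= \sum_(m < n) #|closed_with_border n m|.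
Proof.
move=> n1; apply: card_le_sum_cover => w; rewrite inE /closed_word size_tuple.
rewrite leqNgt n1 /= => /hasP [m]; rewrite mem_iota => /andP[_ mn] h.
by exists m => //; rewrite inE.
Qed.

Lemma closed_with_border0 n : closed_with_border n 0 = set0.
Proof. by apply/setP => w; rewrite !inE /border take0. Qed.

Lemma card_closed_with_border_le n m : #|closed_with_border n m| <= K ^ (n - m).
Proof.
rewrite -[n - m](size_iota 0); apply: (card_le_free_positions (a0 := a0)) => x y.
rewrite !inE => /andP[/border_take [mn ex] _] /andP[/border_take [_ ey] _].
rewrite !size_tuple in mn ex ey => j jn; rewrite mem_iota => jF earlier.
have jm : n - m <= j by lia.
by rewrite -(subnKC jm) -!nth_drop ex ey !nth_take ?earlier //; lia.
Qed.

Lemma closed_with_border_middle n m (w : n.-tuple A) : 2 * m <= n ->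
  w \in closed_with_border n m -> ~~ infix (take m w) (drop m (take (n - m) w)).
Proof.
move=> mn; rewrite inE => /andP[bord occ2]; apply/negP => /infixP [s [s' mid]].
have := @border_cat _ w m; rewrite size_tuple mid => /(_ mn bord) ew.
set u := take m w in ew occ2 *.
have size_u : size u = m by rewrite size_take_min size_tuple; lia.
have size_w : size w = size (u ++ s ++ u ++ s') + size u.
  by rewrite [in LHS]ew !size_cat; lia.
have occ_at x y : (w : seq A) = x ++ u ++ y -> occurs_at u w (size x).
  by move=> ->; apply: occurs_at_cat.
move: occ2; rewrite /occ ifT; last by rewrite size_w leq_addl.
move=> /eqP two; suff : 3 <= 2 by [].
rewrite -[X in _ <= X]two size_w addnK.
apply: (count_iota_ge3 _ (leqnn _) (occ_at [::] _ _) (occ_at (u ++ s) _ _)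
  (occ_at (u ++ s ++ u ++ s') [::] _)).
- have [/andP[m0 _] _] := border_take bord.
  by rewrite /= !size_cat size_u; lia.
- by rewrite ew.
- by rewrite ew -!catA.
- by rewrite ew cats0 -!catA.
Qed.

Lemma card_closed_with_border_le_avoiding n m : 2 * m <= n ->
  #|closed_with_border n m| <= \sum_(u : m.-tuple A) #|avoiding u (n - 2 * m)|.
Proof.
move=> mn; set L := n - 2 * m.
pose P := [set p : m.-tuple A * L.-tuple A | ~~ infix (val p.1) (val p.2)].
pose f (w : n.-tuple A) :=
  (tuple_of_seq a0 m (take m w), tuple_of_seq a0 L (drop m (take (n - m) w))).
have size_l (w : n.-tuple A) : size (take m w) = m.
  by rewrite size_take_min size_tuple; lia.
have size_r (w : n.-tuple A) : size (drop m (take (n - m) w)) = L.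
  by rewrite size_drop size_take_min size_tuple /L; lia.
have ew (w : n.-tuple A) : w \in closed_with_border n m ->
    (w : seq A) = take m w ++ drop m (take (n - m) w) ++ take m w.
  by rewrite inE => /andP[bord _]; have := @border_cat _ w m; rewrite size_tuple; apply.
have -> : \sum_(u : m.-tuple A) #|avoiding u L| = #|P|.
  under eq_bigr do rewrite /avoiding -sum_nat_card.
  by rewrite -sum_nat_card pair_big.
rewrite -(@card_in_imset _ _ f); last first.
  move=> v w vS wS [] /(congr1 val) el /(congr1 val) er; apply: val_inj.
  rewrite /= !val_tuple_of_seq // in el er.
  by rewrite /= (ew v vS) (ew w wS) el er.
apply: subset_leq_card; apply/subsetP => p /imsetP [w wS ->].
by rewrite inE /= !val_tuple_of_seq //; apply: closed_with_border_middle.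
Qed.

Lemma card_closed_with_border_decay n m q : 1 < K -> nblocks K n m = q -> 0 < q ->
  5 ^ q * (n * #|closed_with_border n m|) <= 2 * (q + 2) * 4 ^ q * K ^ n.
Proof.
move=> K1 qE q0.
have [->|m0] := posnP m; first by rewrite closed_with_border0 cards0 !muln0.
have mK : m < K ^ m by apply: ltn_expl.
have B0 : 0 < 2 * K ^ m by rewrite muln_gt0 expn_gt0; lia.
have qB : q * (2 * K ^ m) <= n - 2 * m by rewrite -qE leq_divM.
have qB1 : n - 2 * m < q.+1 * (2 * K ^ m) by rewrite -qE ltn_ceil.
have mn : 2 * m <= n by have := leq_mul (leqnn q) B0; lia.
have n_le : n <= 2 * (q + 2) * K ^ m by set x := K ^ m in mK qB1 *; lia.
have avoid : 5 ^ q * #|closed_with_border n m| <= 4 ^ q * (K ^ m * K ^ (n - 2 * m)).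
  apply: leq_trans (leq_mul (leqnn _) (card_closed_with_border_le_avoiding mn)) _.
  rewrite big_distrr -[K ^ m](card_tuple m A) -sum_nat_const big_distrr /=.
  apply: leq_sum => u _.
  have := card_avoiding_blocks a0 (u := u) q ((n - 2 * m) %% (2 * K ^ m)) K1.
  by rewrite size_tuple -qE -divn_eq; apply.
have expn_n : K ^ m * (K ^ m * K ^ (n - 2 * m)) = K ^ n.
  by rewrite -!expnD; congr (_ ^ _); lia.
rewrite mulnCA; apply: leq_trans (leq_mul n_le avoid) _.
by rewrite -expn_n; apply: eq_leq; ring.
Qed.

End UpperBound.

Lemma nblocks_decreasing K n m1 m2 : 1 < K -> m1 < m2 -> 0 < nblocks K n m1 ->
  nblocks K n m2 < nblocks K n m1.
Proof.
move=> K1 m12 q0; rewrite /nblocks in q0 *.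
apply: (@leq_ltn_trans ((n - 2 * m1) %/ (2 * K ^ m1 * 2))); last first.
  by rewrite divnMA; apply: ltn_Pdiv.
apply: (@leq_trans ((n - 2 * m1) %/ (2 * K ^ m2))); first by apply: leq_div2r; lia.
apply: leq_div2l; first by rewrite !muln_gt0 expn_gt0; lia.
rewrite -mulnA leq_mul2l /=.
apply: (@leq_trans (K ^ m1 * K)); first by rewrite leq_mul2l K1 orbT.
by rewrite -expnSr leq_pexp2l //; lia.
Qed.

Lemma sum_few_blocks K n : 1 < K -> 0 < n ->
  \sum_(m < n | nblocks K n m == 0) n * K ^ (n - m) <= 2 * K ^ (n + 2).
Proof.
move=> K1 n0; set t := trunc_log K n.
have Kt : K ^ t <= n by apply: trunc_logP.
have Kt1 : n < K ^ t.+1 by apply: trunc_log_ltn.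
have t_le m : nblocks K n m == 0 -> t <= m + 1.
  rewrite -leqn0 leqNgt divn_gt0 ?muln_gt0 ?expn_gt0 -?ltnNge; last lia.
  move=> small; have mK : m < K ^ m by apply: ltn_expl.
  have K2 : 4 <= K ^ 2 by rewrite -mulnn; nia.
  have : K ^ t < K ^ (m + 2) by rewrite expnD; nia.
  by rewrite ltn_exp2l //; lia.
rewrite -big_distrr /=.
have reindexed : \sum_(m < n | nblocks K n m == 0) K ^ (n - m)
    <= \sum_(d < (n - t.-1).+1) K ^ d.
  apply: (leq_sum_reindex (P := fun m => nblocks K n m == 0) (h := fun m => n - m)).
    by move=> i iN /t_le; lia.
  by move=> i j iN jN _ _; lia.
apply: (@leq_trans (n * (2 * K ^ (n - t.-1)))).
  by rewrite leq_mul2l (leq_trans reindexed (ltnW (geometric_sum_lt_double _ K1))) orbT.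
rewrite mulnCA leq_mul2l; apply/orP; right.
apply: (@leq_trans (K ^ t.+1 * K ^ (n - t.-1))).
  by rewrite leq_mul2r (ltnW Kt1) orbT.
rewrite -expnD; apply: leq_pexp2l; first lia.
by have := ltn_expl t K1; lia.
Qed.

Section UpperBoundRat.

Local Open Scope ring_scope.

Lemma sum_weighted_geometric N :
  \sum_(d < N) (d%:R + 2) * (4 / 5 : rat) ^+ d = 30 - (5 * N%:R + 30) * (4 / 5) ^+ N.
Proof.
elim: N => [|N IH]; first by rewrite big_ord0 expr0; lra.
by rewrite big_ord_recr /= IH exprS -addn1 natrD; field.
Qed.

Lemma sum_weighted_geometric_le N : \sum_(d < N) (d%:R + 2) * (4 / 5 : rat) ^+ d <= 30.
Proof.
rewrite sum_weighted_geometric lerBlDr lerDl.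
by apply: mulr_ge0; [apply: addr_ge0 => //; apply: mulr_ge0 | apply: exprn_ge0].
Qed.

Variables (A : finType) (a0 : A).
Local Notation K := #|A|.

Lemma card_closed_with_border_decay_rat n m q : (1 < K)%N -> nblocks K n m = q ->
  (0 < q)%N ->
  (n * #|closed_with_border A n m|)%:R
  <= 2 * (K ^ n)%:R * (q%:R + 2) * (4 / 5 : rat) ^+ q.
Proof.
move=> K1 qE q0; have := card_closed_with_border_decay a0 K1 qE q0.
rewrite -(ler_nat rat) !natrM !natrX natrD => decay.
rewrite -(ler_pM2l (exprn_gt0 q (isT : (0 : rat) < 5))) (le_trans decay) //.
rewrite (_ : 5 ^+ q * _ = 2 * (q%:R + 2) * (5 * (4 / 5)) ^+ q * K%:R ^+ n).
  by rewrite [5 * _]mulrC divfK.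
by rewrite [(5 * _) ^+ q]exprMn; ring.
Qed.

Lemma sum_many_blocks n : (1 < K)%N ->
  \sum_(m < n | nblocks K n m != 0%N) (n * #|closed_with_border A n m|)%:R
  <= 60 * (K ^ n)%:R :> rat.
Proof.
move=> K1; set q := nblocks K n.
pose weight d : rat := (d%:R + 2) * (4 / 5) ^+ d.
apply: (@le_trans _ _ (\sum_(m < n | q m != 0%N) 2 * (K ^ n)%:R * weight (q m))).
  apply: ler_sum => m; rewrite -lt0n => q0.
  by rewrite mulrA; apply: card_closed_with_border_decay_rat.
have sum_weight : \sum_(m < n | q m != 0%N) weight (q m) <= 30.
  apply: le_trans (sum_weighted_geometric_le n.+1).
  apply: (ler_sum_reindex (P := fun m => q m != 0%N) (h := q)).
  - by move=> d; apply: mulr_ge0; [apply: addr_ge0 | apply: exprn_ge0].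
  - by move=> i _ _; apply: leq_trans (leq_div _ _) (leq_subr _ _).
  move=> i j _ _; rewrite -!lt0n => qi qj qij.
  by case: (ltngtP i j) => // ij;
    [have := nblocks_decreasing K1 ij qi | have := nblocks_decreasing K1 ij qj];
    rewrite -/(q i) -/(q j) qij ltnn.
rewrite -mulr_sumr; apply: le_trans (ler_wpM2l _ sum_weight) _; last lra.
by apply: mulr_ge0.
Qed.

Lemma closed_upper_bound n : (1 < K)%N -> (1 < n)%N ->
  n%:R * #|[set w : n.-tuple A | closed_word w]|%:R
  <= (2 * K ^ (n + 2))%N%:R + 60 * (K ^ n)%:R :> rat.
Proof.
move=> K1 n1; rewrite -natrM.
apply: le_trans (_ : _ <= (\sum_(m < n) n * #|closed_with_border A n m|)%N%:R) _.
  by rewrite ler_nat -big_distrr leq_mul2l card_closed_le_sum ?orbT.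
rewrite (bigID (fun m : 'I_n => nblocks K n m == 0%N)) natrD /=.
apply: lerD; last by rewrite natr_sum sum_many_blocks.
rewrite ler_nat; apply: leq_trans (sum_few_blocks K1 (ltnW n1)).
by apply: leq_sum => m _; rewrite leq_mul2l (card_closed_with_border_le a0) orbT.
Qed.

End UpperBoundRat.

(** * Lower bound *)

Section LowerBound.

Variables (A : finType) (a0 : A).
Local Notation K := #|A|.

Definition bordered n m := [set x : n.-tuple A | take m x == drop (n - m) x].

Definition bordered_reoccurring n m i :=
  [set x in bordered n m | (0 < i < n - m) && occurs_at (take m x) x i].

Lemma card_bordered n m : 2 * m <= n -> K ^ (n - m) <= #|bordered n m|.
Proof.
move=> mn; pose f (y : (n - m).-tuple A) := tuple_of_seq a0 n (y ++ take m y).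
have size_f (y : (n - m).-tuple A) : size (y ++ take m y) = n.
  by rewrite size_cat size_take_min size_tuple; lia.
rewrite -card_tuple -cardsT -(@card_in_imset _ _ f); last first.
  move=> y z _ _ /(congr1 val); rewrite /f !val_tuple_of_seq // => e.
  by apply: val_inj; have := congr1 (take (n - m)) e; rewrite !take_size_cat ?size_tuple.
apply: subset_leq_card; apply/subsetP => x /imsetP [y _ ->].
rewrite inE /f val_tuple_of_seq // takel_cat ?size_tuple; last lia.
by rewrite drop_size_cat ?size_tuple // take_takel.
Qed.

Lemma card_bordered_reoccurring_le n m i : 0 < m -> 3 * m <= n ->
  #|bordered_reoccurring n m i| <= K ^ (n - 2 * m).
Proof.
move=> m0 mn; have [/andP[i0 im]|outside] := boolP (0 < i < n - m); last first.
  rewrite (_ : bordered_reoccurring n m i = set0) ?cards0 //.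
  by apply/setP => x; rewrite !inE (negbTE outside) andbF.
(* Outside F, position j copies an earlier one: through the border, through the
   occurrence at i, or (for j < i) through the occurrence at i and then the border. *)
pose g j := if n - m <= j then j - (n - m) else if i <= j then j - i else j + i - (n - m).
have free F : (forall j, j < n -> j \notin F ->
      (j < i -> n - m - i <= j < m) /\ (i <= j < n - m -> j < i + m)) ->
    #|bordered_reoccurring n m i| <= K ^ size F.
  move=> outside_F; apply: (card_le_back_references (a0 := a0) (g := g)).
    move=> j jn /(outside_F j jn) [c1 c2]; rewrite /g.
    by case: (leqP (n - m) j) => [|_]; last case: (leqP i j); lia.
  move=> x j; rewrite !inE => /andP[/eqP bx /andP[_ ox]] jn /(outside_F j jn) [c1 c2].
  have size_x : size (take m x) = m by rewrite size_take_min size_tuple; lia.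
  have suffix_at t : t < m -> nth a0 x (n - m + t) = nth a0 x t.
    by move=> tm; rewrite -nth_drop -bx !nth_take.
  have occ_at t : t < m -> nth a0 x (i + t) = nth a0 x t.
    have fits : i + size (take m x) <= size x by rewrite size_x size_tuple; lia.
    by move/(occurs_atP a0 fits): ox => occ tm; rewrite occ ?size_x // nth_take.
  rewrite /g; case: (leqP (n - m) j) => [j_suff|j_mid].
    by rewrite -{1}(subnKC j_suff) suffix_at //; lia.
  case: (leqP i j) => [ij|ji]; first by rewrite -{1}(subnKC ij) occ_at //; lia.
  have /andP[j_lo j_hi] := c1 ji.
  by rewrite -occ_at // (_ : i + j = n - m + (j + i - (n - m))) ?suffix_at //; lia.
have [i_early|i_late] := leqP i (n - 2 * m).
  have := free (iota 0 i ++ iota (i + m) (n - 2 * m - i)).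
  rewrite size_cat !size_iota (_ : i + (n - 2 * m - i) = n - 2 * m); last lia.
  by apply=> j jn; rewrite mem_cat !mem_iota /= => hj; split; lia.
have := free (iota 0 (n - m - i) ++ iota m (i - m)).
rewrite size_cat !size_iota (_ : n - m - i + (i - m) = n - 2 * m); last lia.
by apply=> j jn; rewrite mem_cat !mem_iota /= => hj; split; lia.
Qed.

Lemma bordered_closed n m (x : n.-tuple A) : 0 < m -> 2 * m < n ->
  x \in bordered n m -> (forall i, x \notin bordered_reoccurring n m i) ->
  closed_word x.
Proof.
move=> m0 mn bx no_reocc; have size_u : size (take m x) = m.
  by rewrite size_take_min size_tuple; lia.
apply/orP; right; apply/hasP; exists m; first by rewrite mem_iota size_tuple; lia.
move: (bx); rewrite inE => /eqP suff; apply/andP; split.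
  rewrite /border prefix_take suffixE size_u size_tuple -suff eqxx m0 andbT /=.
  by lia.
rewrite /occ size_u size_tuple ifT; last lia.
apply/eqP/count_iota_ends; first lia.
- by rewrite drop0.
- by rewrite -suff take_takel.
move=> i i_inner; have := no_reocc i; rewrite in_set bx i_inner /=.
by rewrite /occurs_at size_u.
Qed.

Lemma card_closed_ge n m : 0 < m -> 3 * m <= n ->
  K ^ (n - m) <= #|[set w : n.-tuple A | closed_word w]| + n * K ^ (n - 2 * m).
Proof.
move=> m0 mn; set Cl := [set w : n.-tuple A | closed_word w].
have reocc : #|bordered n m :\: Cl| <= n * K ^ (n - 2 * m).
  apply: leq_trans (_ : _ <= \sum_(i < n) #|bordered_reoccurring n m i|) _.
    apply: card_le_sum_cover => x; rewrite in_setD => /andP[not_closed bx].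
    have [i_reocc|] := pickP (fun i : 'I_n => x \in bordered_reoccurring n m i).
      by exists i_reocc.
    move=> none; case/negP: not_closed; rewrite inE.
    apply: (bordered_closed m0 _ bx) => [|i]; first lia.
    have [i_n|n_i] := ltnP i n; first by rewrite -[i]/(val (Ordinal i_n)) none.
    by rewrite in_set; apply/negP => /and3P[_ /andP[_ i_lt] _]; lia.
  rewrite -[n in n * _]card_ord -sum_nat_const; apply: leq_sum => i _.
  exact: card_bordered_reoccurring_le.
have mn2 : 2 * m <= n by lia.
have := card_bordered mn2; rewrite -(cardsID Cl (bordered n m)).
by have := subset_leq_card (subsetIr (bordered n m) Cl); lia.
Qed.

End LowerBound.

Lemma linear_le_exp2 t : 6 <= t -> 6 * t + 6 <= 2 ^ t.
Proof.
elim: t => // t IH; rewrite leq_eqVlt => /orP[/eqP <-|] //.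
by rewrite ltnS => /IH le_t; rewrite expnS; lia.
Qed.

Lemma closed_lower_bound (A : finType) (a0 : A) n : 1 < #|A| -> 17 < n ->
  #|A| ^ n <= 4 * #|A| * n * #|[set w : n.-tuple A | closed_word w]|.
Proof.
move=> K1 n17; set K := #|A|; set Cl := #|[set w : n.-tuple A | closed_word w]|.
set m := (trunc_log K (2 * n)).+1.
have Km1 : K ^ m.-1 <= 2 * n by apply: trunc_logP => //; lia.
have Km : 2 * n < K ^ m by apply: trunc_log_ltn.
have mn : 3 * m <= n.
  rewrite leqNgt; apply/negP => nm.
  have : 2 ^ m.-1 <= K ^ m.-1 by rewrite leq_exp2r //; lia.
  by have := linear_le_exp2 (t := m.-1); lia.
have := card_closed_ge a0 (ltn0Sn _) mn; rewrite -/K -/Cl -/m => lower.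
have expn_nm : K ^ m * K ^ (n - 2 * m) = K ^ (n - m).
  by rewrite -expnD; congr (_ ^ _); lia.
have half_closed : K ^ (n - m) <= 2 * Cl.
  have : 2 * n * K ^ (n - 2 * m) <= K ^ (n - m).
    by rewrite -expn_nm leq_mul2r (ltnW Km) orbT.
  by lia.
have expn_n : K ^ n = K ^ m.-1 * K * K ^ (n - m).
  by rewrite -expnSr prednK // -expnD; congr (_ ^ _); lia.
rewrite expn_n; apply: (@leq_trans (2 * n * K * (2 * Cl))).
  by apply: leq_mul => //; rewrite leq_mul2r Km1 orbT.
by apply: eq_leq; ring.
Qed.

Local Open Scope ring_scope.

Theorem theorem1 (k : nat) (hk : (2 <= k)%N) :
  (exists (N : nat) (c : rat), (0 < N)%N /\ 0 < c /\
     forall n : nat, (N < n)%N -> c * ((k ^ n)%:R / n%:R) <= (C k n)%:R)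
  /\
  (exists (N' : nat) (c' : rat), (0 < N')%N /\ 0 < c' /\
     forall n : nat, (N' < n)%N -> (C k n)%:R <= c' * ((k ^ n)%:R / n%:R)).
Proof.
have a0 : 'I_k := Ordinal (leq_trans (isT : 0 < 2)%N hk).
have K1 : (1 < #|'I_k|)%N by rewrite card_ord.
split.
  exists 17%N, (4 * k%:R)^-1; split=> //; split.
    by rewrite invr_gt0 mulr_gt0 // ltr0n; lia.
  move=> n n17; have := closed_lower_bound a0 K1 n17; rewrite card_ord => lower.
  have n0 : (0 : rat) < n%:R by rewrite ltr0n; lia.
  rewrite /C mulrA ler_pdivrMr // ler_pdivrMl; last by rewrite mulr_gt0 // ltr0n; lia.
  by rewrite [_ * n%:R]mulrC mulrA; rewrite -(ler_nat rat) !natrM in lower.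
exists 1%N, (2 * k%:R ^+ 2 + 60); split=> //; split.
  by rewrite addr_gt0 // mulr_gt0 // exprn_gt0 // ltr0n; lia.
move=> n n1; have := closed_upper_bound a0 K1 n1; rewrite card_ord => upper.
have n0 : (0 : rat) < n%:R by rewrite ltr0n; lia.
rewrite /C mulrA ler_pdivlMr // mulrC (le_trans upper) //.
by rewrite natrM !natrX exprD; nra.
Qed.
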